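(* Let $(c_{i,j})_{0\le i,j\le 3}$ be real numbers satisfying the fourteen equations (E0), (R1)–(R9), (O1)–(O4). Then $$\big|\,c_{2,2}+c_{3,3}-c_{3,2}-c_{2,3}\,\big|\le \frac{\sqrt7}{4}<1 .$$
   Context: (E0): $\sum_{i=0}^3\sum_{j=0}^3 c_{i,j}=4$. Regularity equations: (R1) $c_{0,1}+c_{0,3}+c_{2,1}+c_{2,3}=c_{0,0}+c_{0,2}+c_{2,0}+c_{2,2}$; (R2) $c_{1,1}+c_{1,3}+c_{3,1}+c_{3,3}=c_{0,0}+c_{0,2}+c_{2,0}+c_{2,2}$; (R3) $c_{1,0}+c_{1,2}+c_{3,0}+c_{3,2}=c_{0,0}+c_{0,2}+c_{2,0}+c_{2,2}$; (R4) $c_{2,1}+c_{2,3}=c_{2,0}+c_{2,2}$; (R5) $c_{1,1}+c_{1,3}+3c_{3,1}+3c_{3,3}=2c_{2,0}+2c_{2,2}$; (R6) $c_{1,0}+c_{1,2}+3c_{3,0}+3c_{3,2}=2c_{2,0}+2c_{2,2}$; (R7) $c_{0,1}+c_{2,1}+3c_{0,3}+3c_{2,3}=2c_{0,2}+2c_{2,2}$; (R8) $c_{1,1}+c_{3,1}+3c_{1,3}+3c_{3,3}=2c_{0,2}+2c_{2,2}$; (R9) $c_{1,2}+c_{3,2}=c_{0,2}+c_{2,2}$. Orthogonality equations: (O1) $\sum_{i=0}^3\sum_{j=0}^3 c_{i,j}^2=4$; (O2) $c_{3,3}c_{1,1}+c_{3,2}c_{1,0}+c_{2,3}c_{0,1}+c_{2,2}c_{0,0}=0$;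 (O3) $c_{3,3}c_{1,3}+c_{3,2}c_{1,2}+c_{2,3}c_{0,3}+c_{2,2}c_{0,2}+c_{3,1}c_{1,1}+c_{3,0}c_{1,0}+c_{2,1}c_{0,1}+c_{2,0}c_{0,0}=0$; (O4) $c_{3,3}c_{3,1}+c_{3,2}c_{3,0}+c_{2,3}c_{2,1}+c_{2,2}c_{2,0}+c_{1,3}c_{1,1}+c_{1,2}c_{1,0}+c_{0,3}c_{0,1}+c_{0,2}c_{0,0}=0$. *)

From Stdlib Require Import Reals.
Open Scope R_scope.

Definition sum44 (f : nat -> nat -> R) : R :=
  f 0%nat 0%nat + f 0%nat 1%nat + f 0%nat 2%nat + f 0%nat 3%nat
+ f 1%nat 0%nat + f 1%nat 1%nat + f 1%nat 2%nat + f 1%nat 3%nat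
+ f 2%nat 0%nat + f 2%nat 1%nat + f 2%nat 2%nat + f 2%nat 3%nat
+ f 3%nat 0%nat + f 3%nat 1%nat + f 3%nat 2%nat + f 3%nat 3%nat.

(* The regularity equations have rank ten, so the coefficients are affine
   in c13, c22, c23, c31, c32, c33.  Put u := c13 + c31 + 2 c33 and
   t := c22 + c23 + c32 + c33.  Combinations of the orthogonality equations
   give (O3 - O4) (c13 - c31)(2u - 1) = 0, (4 O2 + O3 + O4) t = 2u^2 - 1/4,
   (O1 - 4 O2) u^2 - u - 1/2 = -(c13 - c31)^2, and (O2) the vector
   w := (c22, c23 + 1/4, c32 + 1/4, c33 + 1/2) has |w|^2 = u t + 3/8.
   The quantity X := c22 + c33 - c32 - c23 is the inner product of w with
   (1,-1,-1,1), which is orthogonal to (1,1,1,1), so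
   X^2 <= 4 |w|^2 - (t + 1)^2.  Eliminating t, the right-hand side is
   7/16 - (2u - 1)^2 (u^2 - u - 1/2) = 7/16 + ((2u - 1)(c13 - c31))^2 = 7/16. *)

From Stdlib Require Import Reals Lra.
Open Scope R_scope.

Lemma alt_sum_sq_add_sum_sq_le (x1 x2 x3 x4 : R) :
  (x1 - x2 - x3 + x4) ^ 2 + (x1 + x2 + x3 + x4) ^ 2
  <= 4 * (x1 ^ 2 + x2 ^ 2 + x3 ^ 2 + x4 ^ 2).
Proof.
  (* Parseval for the orthogonal basis of Hadamard vectors of R^4. *)
  assert (Hparseval :
    4 * (x1 ^ 2 + x2 ^ 2 + x3 ^ 2 + x4 ^ 2)
    = (x1 - x2 - x3 + x4) ^ 2 + (x1 + x2 + x3 + x4) ^ 2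
      + (x1 - x2 + x3 - x4) ^ 2 + (x1 + x2 - x3 - x4) ^ 2) by ring.
  rewrite Hparseval.
  pose proof (pow2_ge_0 (x1 - x2 + x3 - x4)).
  pose proof (pow2_ge_0 (x1 + x2 - x3 - x4)).
  lra.
Qed.

Lemma Rabs_le_sqrt_of_sq_le (x a : R) : x ^ 2 <= a -> Rabs x <= sqrt a.
Proof.
  intros Hx.
  rewrite <- (sqrt_pow2 (Rabs x)) by apply Rabs_pos.
  rewrite pow2_abs; apply sqrt_le_1_alt, Hx.
Qed.

Section Coefficients.

Variable c : nat -> nat -> R.

Local Notation c00 := (c 0%nat 0%nat).
Local Notation c01 := (c 0%nat 1%nat).
Local Notation c02 := (c 0%nat 2%nat).
Local Notation c03 := (c 0%nat 3%nat).
Local Notation c10 := (c 1%nat 0%nat).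
Local Notation c11 := (c 1%nat 1%nat).
Local Notation c12 := (c 1%nat 2%nat).
Local Notation c13 := (c 1%nat 3%nat).
Local Notation c20 := (c 2%nat 0%nat).
Local Notation c21 := (c 2%nat 1%nat).
Local Notation c22 := (c 2%nat 2%nat).
Local Notation c23 := (c 2%nat 3%nat).
Local Notation c30 := (c 3%nat 0%nat).
Local Notation c31 := (c 3%nat 1%nat).
Local Notation c32 := (c 3%nat 2%nat).
Local Notation c33 := (c 3%nat 3%nat).

Local Notation u := (c13 + c31 + 2 * c33).
Local Notation t := (c22 + c23 + c32 + c33).

Hypothesis E0 : sum44 c = 4.
Hypothesis R1 : c01 + c03 + c21 + c23 = c00 + c02 + c20 + c22.
Hypothesis R2 : c11 + c13 + c31 + c33 = c00 + c02 + c20 + c22.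
Hypothesis R3 : c10 + c12 + c30 + c32 = c00 + c02 + c20 + c22.
Hypothesis R4 : c21 + c23 = c20 + c22.
Hypothesis R5 : c11 + c13 + 3 * c31 + 3 * c33 = 2 * c20 + 2 * c22.
Hypothesis R6 : c10 + c12 + 3 * c30 + 3 * c32 = 2 * c20 + 2 * c22.
Hypothesis R7 : c01 + c21 + 3 * c03 + 3 * c23 = 2 * c02 + 2 * c22.
Hypothesis R8 : c11 + c31 + 3 * c13 + 3 * c33 = 2 * c02 + 2 * c22.
Hypothesis R9 : c12 + c32 = c02 + c22.
Hypothesis O1 : sum44 (fun i j => (c i j) ^ 2) = 4.
Hypothesis O2 : c33 * c11 + c32 * c10 + c23 * c01 + c22 * c00 = 0.
Hypothesis O3 :
  c33 * c13 + c32 * c12 + c23 * c03 + c22 * c02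
  + c31 * c11 + c30 * c10 + c21 * c01 + c20 * c00 = 0.
Hypothesis O4 :
  c33 * c31 + c32 * c30 + c23 * c21 + c22 * c20
  + c13 * c11 + c12 * c10 + c03 * c01 + c02 * c00 = 0.

Lemma regularity_solution :
  c00 = - c13 + c22 - c31 - 2 * c33 /\
  c01 = 1/2 - c13 + c23 - c31 - 2 * c33 /\
  c02 = 1/2 + c13 - c22 + c33 /\
  c03 = c13 - c23 + c33 /\
  c10 = 1/2 - c13 - c31 + c32 - 2 * c33 /\
  c11 = 1 - c13 - c31 - c33 /\
  c12 = 1/2 + c13 - c32 + c33 /\
  c20 = 1/2 - c22 + c31 + c33 /\
  c21 = 1/2 - c23 + c31 + c33 /\
  c30 = c31 - c32 + c33.
Proof. unfold sum44 in E0; repeat split; lra. Qed.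

Ltac eliminate_dependent_entries :=
  destruct regularity_solution
    as (H00 & H01 & H02 & H03 & H10 & H11 & H12 & H20 & H21 & H30);
  rewrite H00, H01, H02, H03, H10, H11, H12, H20, H21, H30 in *.

Lemma off_diagonal_factor : (c13 - c31) * (u - 1/2) = 0.
Proof. eliminate_dependent_entries; lra. Qed.

Lemma block_sum_eq : t = 2 * u ^ 2 - 1/4.
Proof. eliminate_dependent_entries; lra. Qed.

Lemma quadratic_in_u : u ^ 2 - u - 1/2 = - (c13 - c31) ^ 2.
Proof.
  pose proof block_sum_eq as HS.
  unfold sum44 in O1; cbv beta in O1.
  eliminate_dependent_entries; lra.
Qed.

Lemma block_sphere :
  c22 ^ 2 + (c23 + 1/4) ^ 2 + (c32 + 1/4) ^ 2 + (c33 + 1/2) ^ 2 = u * t + 3/8.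
Proof. eliminate_dependent_entries; lra. Qed.

Lemma block_diff_sq_le : (c22 + c33 - c32 - c23) ^ 2 <= 7/16.
Proof.
  assert (Hpar :
    (c22 + c33 - c32 - c23) ^ 2 <= 4 * (u * t + 3/8) - (t + 1) ^ 2).
  { pose proof (alt_sum_sq_add_sum_sq_le
                  c22 (c23 + 1/4) (c32 + 1/4) (c33 + 1/2)) as Hle.
    rewrite block_sphere in Hle; lra. }
  rewrite block_sum_eq in Hpar.
  replace (4 * (u * (2 * u ^ 2 - 1/4) + 3/8) - (2 * u ^ 2 - 1/4 + 1) ^ 2)
    with (7/16 - (2 * u - 1) ^ 2 * (u ^ 2 - u - 1/2)) in Hpar by field.
  rewrite quadratic_in_u in Hpar.
  replace ((2 * u - 1) ^ 2 * - (c13 - c31) ^ 2)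
    with (- (2 * ((c13 - c31) * (u - 1/2))) ^ 2) in Hpar by field.
  rewrite off_diagonal_factor in Hpar; lra.
Qed.

End Coefficients.

Theorem mainTheorem8 (c : nat -> nat -> R) :
  (* (E0) *)
  sum44 c = 4 ->
  (* (R1) *)
  c 0%nat 1%nat + c 0%nat 3%nat + c 2%nat 1%nat + c 2%nat 3%nat
    = c 0%nat 0%nat + c 0%nat 2%nat + c 2%nat 0%nat + c 2%nat 2%nat ->
  (* (R2) *)
  c 1%nat 1%nat + c 1%nat 3%nat + c 3%nat 1%nat + c 3%nat 3%nat
    = c 0%nat 0%nat + c 0%nat 2%nat + c 2%nat 0%nat + c 2%nat 2%nat ->
  (* (R3) *)
  c 1%nat 0%nat + c 1%nat 2%nat + c 3%nat 0%nat + c 3%nat 2%nat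
    = c 0%nat 0%nat + c 0%nat 2%nat + c 2%nat 0%nat + c 2%nat 2%nat ->
  (* (R4) *)
  c 2%nat 1%nat + c 2%nat 3%nat = c 2%nat 0%nat + c 2%nat 2%nat ->
  (* (R5) *)
  c 1%nat 1%nat + c 1%nat 3%nat + 3 * c 3%nat 1%nat + 3 * c 3%nat 3%nat
    = 2 * c 2%nat 0%nat + 2 * c 2%nat 2%nat ->
  (* (R6) *)
  c 1%nat 0%nat + c 1%nat 2%nat + 3 * c 3%nat 0%nat + 3 * c 3%nat 2%nat
    = 2 * c 2%nat 0%nat + 2 * c 2%nat 2%nat ->
  (* (R7) *)
  c 0%nat 1%nat + c 2%nat 1%nat + 3 * c 0%nat 3%nat + 3 * c 2%nat 3%nat
    = 2 * c 0%nat 2%nat + 2 * c 2%nat 2%nat ->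
  (* (R8) *)
  c 1%nat 1%nat + c 3%nat 1%nat + 3 * c 1%nat 3%nat + 3 * c 3%nat 3%nat
    = 2 * c 0%nat 2%nat + 2 * c 2%nat 2%nat ->
  (* (R9) *)
  c 1%nat 2%nat + c 3%nat 2%nat = c 0%nat 2%nat + c 2%nat 2%nat ->
  (* (O1) *)
  sum44 (fun i j => (c i j) ^ 2) = 4 ->
  (* (O2) *)
  c 3%nat 3%nat * c 1%nat 1%nat + c 3%nat 2%nat * c 1%nat 0%nat
    + c 2%nat 3%nat * c 0%nat 1%nat + c 2%nat 2%nat * c 0%nat 0%nat = 0 ->
  (* (O3) *)
  c 3%nat 3%nat * c 1%nat 3%nat + c 3%nat 2%nat * c 1%nat 2%nat
    + c 2%nat 3%nat * c 0%nat 3%nat + c 2%nat 2%nat * c 0%nat 2%nat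
    + c 3%nat 1%nat * c 1%nat 1%nat + c 3%nat 0%nat * c 1%nat 0%nat
    + c 2%nat 1%nat * c 0%nat 1%nat + c 2%nat 0%nat * c 0%nat 0%nat = 0 ->
  (* (O4) *)
  c 3%nat 3%nat * c 3%nat 1%nat + c 3%nat 2%nat * c 3%nat 0%nat
    + c 2%nat 3%nat * c 2%nat 1%nat + c 2%nat 2%nat * c 2%nat 0%nat
    + c 1%nat 3%nat * c 1%nat 1%nat + c 1%nat 2%nat * c 1%nat 0%nat
    + c 0%nat 3%nat * c 0%nat 1%nat + c 0%nat 2%nat * c 0%nat 0%nat = 0 ->
  Rabs (c 2%nat 2%nat + c 3%nat 3%nat - c 3%nat 2%nat - c 2%nat 3%nat)
    <= sqrt 7 / 4
  /\ sqrt 7 / 4 < 1.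
Proof.
  intros E0 R1 R2 R3 R4 R5 R6 R7 R8 R9 O1 O2 O3 O4.
  assert (Hsqrt : sqrt (7/16) = sqrt 7 / 4).
  { rewrite sqrt_div_alt by lra.
    replace 16 with (4 ^ 2) by ring.
    rewrite sqrt_pow2 by lra; reflexivity. }
  assert (Hlt : sqrt 7 < 4).
  { rewrite <- (sqrt_pow2 4) by lra; apply sqrt_lt_1; lra. }
  split; [| lra].
  rewrite <- Hsqrt; apply Rabs_le_sqrt_of_sq_le.
  exact (block_diff_sq_le c E0 R1 R2 R3 R4 R5 R6 R7 R8 R9 O1 O2 O3 O4).
Qed.
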